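(* Let $\mathcal{R}$ be a proper reflective subcategory of the category of groups. Then there is no non-trivial subfunctor $F$ of the identity functor on the category of groups such that $F(G)\in\mathcal{R}$ for every group $G$.
   Context: A full subcategory $\mathcal{R}$ of the category of groups is reflective if the inclusion functor has a left adjoint. It is proper if it is closed under isomorphisms and not equal to the whole category of groups. A subfunctor $F$ of the identity functor assigns to each group $G$ a subgroup $F(G)\subseteq G$ with $f(F(G))\subseteq F(G')$ for every homomorphism $f:G\to G'$; it is non-trivial if $F(G)\neq 1$ for some $G$. *)

From Stdlib Require Import ProofIrrelevance.

Set Implicit Arguments.

Record Group := {
  carrier :> Type;
  gmul : carrier -> carrier -> carrier;
  gone : carrier;
  ginv : carrier -> carrier;
  gmulA : forall x y z, gmul x (gmul y z) = gmul (gmul x y) z;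
  gmul1l : forall x, gmul gone x = x;
  gmul1r : forall x, gmul x gone = x;
  gmulVl : forall x, gmul (ginv x) x = gone;
  gmulVr : forall x, gmul x (ginv x) = gone
}.

Arguments gmul {g}.
Arguments gone {g}.
Arguments ginv {g}.

Record hom (G H : Group) := {
  hfun :> G -> H;
  hmul : forall x y, hfun (gmul x y) = gmul (hfun x) (hfun y)
}.

Definition isomorphic (G H : Group) : Prop :=
  exists (f : hom G H) (g : hom H G),
    (forall x, g (f x) = x) /\ (forall y, f (g y) = y).

(* A full subcategory of Grp is given by a predicate on groups. *)
Definition iso_closed (R : Group -> Prop) : Prop :=
  forall G H, R G -> isomorphic G H -> R H.

Definition proper_subcat (R : Group -> Prop) : Prop :=
  iso_closed R /\ exists G, ~ R G.

(* Reflective: the inclusion has a left adjoint, i.e. every group G has a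
   reflection (universal arrow) eta : G -> L G with L G in R. *)
Definition reflective (R : Group -> Prop) : Prop :=
  forall G : Group, exists (L : Group) (eta : hom G L),
    R L /\
    forall H : Group, R H -> forall f : hom G H,
      (exists g : hom L H, forall x, g (eta x) = f x) /\
      (forall g1 g2 : hom L H,
         (forall x, g1 (eta x) = g2 (eta x)) -> forall y, g1 y = g2 y).

Record subgroup (G : Group) := {
  smem : G -> Prop;
  smem1 : smem gone;
  smemM : forall {x y}, smem x -> smem y -> smem (gmul x y);
  smemV : forall {x}, smem x -> smem (ginv x)
}.

Section SubgroupGroup.
Variables (G : Group) (S : subgroup G).

Definition sg_car := { x : G | smem S x }.

Definition sg_mul (a b : sg_car) : sg_car :=
  exist _ (gmul (proj1_sig a) (proj1_sig b))
        (smemM S (proj2_sig a) (proj2_sig b)).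
Definition sg_one : sg_car := exist _ gone (smem1 S).
Definition sg_inv (a : sg_car) : sg_car :=
  exist _ (ginv (proj1_sig a)) (smemV S (proj2_sig a)).

Lemma sg_eq (a b : sg_car) : proj1_sig a = proj1_sig b -> a = b.
Proof.
destruct a as [a pa], b as [b pb]; simpl; intros ->.
f_equal; apply proof_irrelevance.
Qed.

Lemma sg_mulA x y z : sg_mul x (sg_mul y z) = sg_mul (sg_mul x y) z.
Proof. apply sg_eq; simpl; apply gmulA. Qed.
Lemma sg_mul1l x : sg_mul sg_one x = x.
Proof. apply sg_eq; simpl; apply gmul1l. Qed.
Lemma sg_mul1r x : sg_mul x sg_one = x.
Proof. apply sg_eq; simpl; apply gmul1r. Qed.
Lemma sg_mulVl x : sg_mul (sg_inv x) x = sg_one.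
Proof. apply sg_eq; simpl; apply gmulVl. Qed.
Lemma sg_mulVr x : sg_mul x (sg_inv x) = sg_one.
Proof. apply sg_eq; simpl; apply gmulVr. Qed.

Definition subgroup_group : Group :=
  {| carrier := sg_car; gmul := sg_mul; gone := sg_one; ginv := sg_inv;
     gmulA := sg_mulA; gmul1l := sg_mul1l; gmul1r := sg_mul1r;
     gmulVl := sg_mulVl; gmulVr := sg_mulVr |}.
End SubgroupGroup.

Definition is_subfunctor (F : forall G : Group, subgroup G) : Prop :=
  forall (G G' : Group) (f : hom G G') (x : G),
    smem (F G) x -> smem (F G') (f x).

Definition nontrivial_subfunctor (F : forall G : Group, subgroup G) : Prop :=
  exists (G : Group) (x : G), smem (F G) x /\ x <> gone.

From Stdlib Require Import ZArith Lia FunctionalExtensionality ClassicalEpsilon.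

(* Let x0 <> 1 lie in F(G0) and let H be any group. In the unrestricted wreath
   product W = (H wr Z) wr G0, the element e(h) carrying h at the coordinate
   (1, 0) is a double commutator of elements of W with the image of x0; as
   conjugations are endomorphisms, F(W) is closed under such commutators, so
   e embeds H into F(W). The image lies in the kernel of the map
   F(W) -> F(Z wr G0) induced by H wr Z -> Z, and on that kernel evaluation at
   (1, 0) is a homomorphism retracting e. A reflective subcategory is closed
   under kernels of maps between its objects and under retracts, so every
   group H would lie in R. *)

Set Implicit Arguments.

Arguments gmulA {g} x y z.
Arguments gmul1l {g} x.
Arguments gmul1r {g} x.
Arguments gmulVl {g} x.
Arguments gmulVr {g} x.

Lemma inv_unique (G : Group) (x y : G) : gmul x y = gone -> y = ginv x.
Proof.
  intro E. rewrite <- (gmul1l y), <- (gmulVl x), <- gmulA, E, gmul1r. reflexivity.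
Qed.

Lemma ginv_one (G : Group) : ginv (gone : G) = gone.
Proof. symmetry; apply inv_unique, gmul1l. Qed.

Lemma hom_one (G H : Group) (f : hom G H) : f gone = gone.
Proof.
  assert (E : gmul (f gone) (f gone) = gmul (f gone) gone).
  { rewrite <- hmul, gmul1l, gmul1r. reflexivity. }
  rewrite <- (gmul1l (f gone)), <- (gmulVl (f gone)), <- gmulA, E, gmul1r, gmulVl.
  reflexivity.
Qed.

Lemma hom_inv (G H : Group) (f : hom G H) (x : G) : f (ginv x) = ginv (f x).
Proof. apply inv_unique. rewrite <- hmul, gmulVr. apply hom_one. Qed.

Definition hcomp (A B C : Group) (g : hom B C) (f : hom A B) : hom A C.
Proof. refine {| hfun := fun x => g (f x) |}. intros x y. rewrite !hmul. reflexivity. Defined.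

Definition hid (A : Group) : hom A A := {| hfun := fun x => x; hmul := fun _ _ => eq_refl |}.

Definition htriv (A B : Group) : hom A B.
Proof. refine {| hfun := fun _ => gone |}. intros. symmetry. apply gmul1l. Defined.

Definition sg_incl (G : Group) (S : subgroup G) : hom (subgroup_group S) G :=
  {| hfun := fun x : subgroup_group S => proj1_sig x; hmul := fun _ _ => eq_refl |}.

Definition hom_corestrict (A B : Group) (f : hom A B) (S : subgroup B)
  (fS : forall x, smem S (f x)) : hom A (subgroup_group S).
Proof.
  refine {| hfun := fun x => exist _ (f x) (fS x) : subgroup_group S |}.
  intros x y. apply sg_eq, hmul.
Defined.

Definition kernel (A B : Group) (f : hom A B) : subgroup A.
Proof.
  refine {| smem := fun x => f x = gone |}.
  - apply hom_one.
  - intros x y fx fy. rewrite hmul, fx, fy. apply gmul1l.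
  - intros x fx. rewrite hom_inv, fx. apply ginv_one.
Defined.

Section Reflective.
Variable R : Group -> Prop.
Hypotheses (Riso : iso_closed R) (Rrefl : reflective R).

Definition reflection (G L : Group) (eta : hom G L) : Prop :=
  R L /\
  forall A : Group, R A -> forall f : hom G A,
    (exists g : hom L A, forall x, g (eta x) = f x) /\
    (forall g1 g2 : hom L A, (forall x, g1 (eta x) = g2 (eta x)) -> forall y, g1 y = g2 y).

Lemma reflection_split (G L : Group) (eta : hom G L) (g : hom L G) :
  reflection eta -> (forall x, g (eta x) = x) -> R G.
Proof.
  intros [RL univ] g_eta. apply (Riso RL). exists g, eta. split; [|exact g_eta].
  destruct (univ L RL eta) as [_ uniq].
  apply (uniq (hcomp eta g) (hid L)). intro x. simpl. rewrite g_eta. reflexivity.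
Qed.

Lemma reflective_retract (A G : Group) (i : hom G A) (r : hom A G) :
  R A -> (forall x, r (i x) = x) -> R G.
Proof.
  intros RA ri. destruct (Rrefl G) as [L [eta Heta]].
  destruct (proj2 Heta A RA i) as [[k k_eta] _].
  apply (reflection_split (hcomp r k) Heta).
  intro x. simpl. rewrite k_eta. apply ri.
Qed.

Lemma reflective_kernel (A B : Group) (p : hom A B) :
  R A -> R B -> R (subgroup_group (kernel p)).
Proof.
  intros RA RB. destruct (Rrefl (subgroup_group (kernel p))) as [L [eta Heta]].
  destruct (proj2 Heta A RA (sg_incl _)) as [[k k_eta] _].
  assert (pk : forall y, p (k y) = gone).
  { destruct (proj2 Heta B RB (htriv _ B)) as [_ uniq].
    intro y. apply (uniq (hcomp p k) (htriv L B)).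
    intro x. simpl. rewrite k_eta. exact (proj2_sig x). }
  apply (reflection_split (hom_corestrict k (kernel p) pk) Heta).
  intro x. apply sg_eq, k_eta.
Qed.
End Reflective.

Section Commutators.
Context {G : Group}.

Definition conjg (w x : G) : G := gmul w (gmul x (ginv w)).
Definition commg (w x : G) : G := gmul (conjg w x) (ginv x).

Definition conjg_hom (w : G) : hom G G.
Proof.
  refine {| hfun := conjg w |}. intros x y. unfold conjg.
  rewrite <- !gmulA, (gmulA (ginv w) w), gmulVl, gmul1l. reflexivity.
Defined.

Lemma commg_1l (x : G) : commg gone x = gone.
Proof. unfold commg, conjg. rewrite ginv_one, gmul1l, gmul1r, gmulVr. reflexivity. Qed.
End Commutators.

Lemma subfunctor_commg (F : forall G : Group, subgroup G) (G : Group) (w x : G) :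
  is_subfunctor F -> smem (F G) x -> smem (F G) (commg w x).
Proof.
  intros HF Fx. apply smemM; [exact (HF G G (conjg_hom w) x Fx) | apply smemV, Fx].
Qed.

Section Wreath.
Variables M K : Group.

Definition wr_mul (x y : (K -> M) * K) : (K -> M) * K :=
  (fun a => gmul (fst x a) (fst y (gmul a (snd x))), gmul (snd x) (snd y)).
Definition wr_one : (K -> M) * K := (fun _ => gone, gone).
Definition wr_inv (x : (K -> M) * K) : (K -> M) * K :=
  (fun a => ginv (fst x (gmul a (ginv (snd x)))), ginv (snd x)).

Lemma wr_mulA x y z : wr_mul x (wr_mul y z) = wr_mul (wr_mul x y) z.
Proof.
  unfold wr_mul; simpl. f_equal; [|apply gmulA].
  extensionality a. rewrite gmulA, gmulA. reflexivity.
Qed.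

Lemma wr_mul1l x : wr_mul wr_one x = x.
Proof.
  destruct x as [f g]. unfold wr_mul; simpl. f_equal; [|apply gmul1l].
  extensionality a. rewrite gmul1r, gmul1l. reflexivity.
Qed.

Lemma wr_mul1r x : wr_mul x wr_one = x.
Proof.
  destruct x as [f g]. unfold wr_mul; simpl. f_equal; [|apply gmul1r].
  extensionality a. apply gmul1r.
Qed.

Lemma wr_mulVl x : wr_mul (wr_inv x) x = wr_one.
Proof.
  unfold wr_mul, wr_inv, wr_one; simpl. f_equal; [|apply gmulVl].
  extensionality a. apply gmulVl.
Qed.

Lemma wr_mulVr x : wr_mul x (wr_inv x) = wr_one.
Proof.
  unfold wr_mul, wr_inv, wr_one; simpl. f_equal; [|apply gmulVr].
  extensionality a. rewrite <- gmulA, gmulVr, gmul1r. apply gmulVr.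
Qed.

Definition wreath : Group :=
  {| carrier := (K -> M) * K; gmul := wr_mul; gone := wr_one; ginv := wr_inv;
     gmulA := wr_mulA; gmul1l := wr_mul1l; gmul1r := wr_mul1r;
     gmulVl := wr_mulVl; gmulVr := wr_mulVr |}.

Definition wreath_top_proj : hom wreath K :=
  {| hfun := fun x : wreath => snd x; hmul := fun _ _ => eq_refl |}.

Definition wreath_top_incl : hom K wreath.
Proof.
  refine {| hfun := fun g => (fun _ => gone, g) : wreath |}.
  intros g g'. unfold gmul at 2; simpl. unfold wr_mul; simpl.
  f_equal. extensionality a. symmetry. apply gmul1l.
Defined.

Lemma wr_fst_mul (x y : wreath) (a : K) :
  snd x = gone -> fst (gmul x y) a = gmul (fst x a) (fst y a).
Proof. intro x1. simpl. rewrite x1, gmul1r. reflexivity. Qed.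

Definition single (a : K) (m : M) : wreath :=
  (fun b => if excluded_middle_informative (b = a) then m else gone, gone).

Lemma single_at (a : K) (m : M) : fst (single a m) a = m.
Proof. simpl. destruct (excluded_middle_informative (a = a)); congruence. Qed.

Lemma single_off (a b : K) (m : M) : b <> a -> fst (single a m) b = gone.
Proof. simpl. destruct (excluded_middle_informative (b = a)); congruence. Qed.

Lemma single_one (a : K) : single a gone = gone.
Proof.
  unfold single. simpl. unfold wr_one. f_equal. extensionality b.
  destruct (excluded_middle_informative (b = a)); reflexivity.
Qed.

Definition single_hom (a : K) : hom M wreath.
Proof.
  refine {| hfun := single a |}. intros m n. simpl. unfold single, wr_mul; simpl.
  f_equal; [|symmetry; apply gmul1l].
  extensionality b. rewrite gmul1r.
  destruct (excluded_middle_informative (b = a)); [reflexivity|]. symmetry. apply gmul1l.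
Defined.

Lemma commg_base_top (x : wreath) (g : K) :
  snd x = gone ->
  commg x (wreath_top_incl g) = (fun b => gmul (fst x b) (ginv (fst x (gmul b g))), gone).
Proof.
  destruct x as [f k]. simpl. intros ->.
  unfold commg, conjg; simpl. unfold wr_mul, wr_inv; simpl.
  rewrite !ginv_one, !gmul1l, !gmul1r, gmulVr. f_equal.
  extensionality b. rewrite !gmul1l, !gmul1r. reflexivity.
Qed.

Lemma commg_single_base (a : K) (m : M) (f : K -> M) :
  commg (single a m) (f, gone) = single a (commg m (f a)).
Proof.
  unfold commg, conjg, single; simpl. unfold wr_mul, wr_inv; simpl.
  rewrite !ginv_one, !gmul1l. f_equal.
  extensionality b. rewrite !gmul1r.
  destruct (excluded_middle_informative (b = a)) as [->|_]; [reflexivity|].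
  apply commg_1l.
Qed.
End Wreath.

Arguments single {M K}.
Arguments single_hom {M K}.

Definition wreath_map (M N K : Group) (f : hom M N) : hom (wreath M K) (wreath N K).
Proof.
  refine {| hfun := fun x : wreath M K => (fun a => f (fst x a), snd x) : wreath N K |}.
  intros x y. simpl. unfold wr_mul. f_equal. extensionality a. apply hmul.
Defined.

Lemma wreath_map_single (M N K : Group) (f : hom M N) (a : K) (m : M) :
  wreath_map K f (single a m) = single a (f m).
Proof.
  simpl. unfold single. f_equal. extensionality b.
  destruct (excluded_middle_informative (b = a)); [reflexivity|apply hom_one].
Qed.

Definition Zgroup : Group.
Proof.
  refine {| carrier := Z; gmul := Z.add; gone := 0%Z; ginv := Z.opp |}; intros; lia.
Defined.

Section Lamplighter.
Variable H : Group.

Definition shift : wreath H Zgroup := wreath_top_incl H Zgroup 1%Z.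

(* [h] on the half-line (-oo, 0]: its difference with its translate is [h] at 0. *)
Definition ray (h : H) : wreath H Zgroup :=
  (fun k => if Z_le_dec k 0 then h else gone, gone).

Lemma commg_ray_shift (h : H) : commg (ray h) shift = single (0%Z : Zgroup) h.
Proof.
  unfold shift. rewrite commg_base_top by reflexivity. unfold single. f_equal.
  extensionality k. simpl.
  destruct (excluded_middle_informative _), (Z_le_dec k 0), (Z_le_dec (k + 1) 0); try lia.
  - rewrite ginv_one. apply gmul1r.
  - apply gmulVr.
  - rewrite ginv_one. apply gmul1r.
Qed.
End Lamplighter.

Arguments ray {H}.

Section Embedding.
Context {F : forall G : Group, subgroup G} (HF : is_subfunctor F) (H G0 : Group).

Local Notation W := (wreath (wreath H Zgroup) G0).
Local Notation pi := (wreath_map G0 (wreath_top_proj H Zgroup)).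
Local Notation p :=
  (hom_corestrict (hcomp pi (sg_incl (F W))) _ (fun x => HF pi _ (proj2_sig x))).

Definition embed : hom H W := hcomp (single_hom gone) (single_hom (0%Z : Zgroup)).

Lemma embedE (h : H) : embed h = single gone (single (0%Z : Zgroup) h).
Proof. reflexivity. Qed.

Lemma embed_commg (x0 : G0) (h : H) :
  x0 <> gone ->
  embed h =
  commg (single gone (ray h)) (commg (single gone (shift H)) (wreath_top_incl _ _ x0)).
Proof.
  intro x0_ne1. rewrite commg_base_top by reflexivity. rewrite commg_single_base.
  rewrite gmul1l, single_at, single_off, ginv_one, gmul1r by exact x0_ne1.
  rewrite commg_ray_shift. reflexivity.
Qed.

Lemma pi_embed (h : H) : pi (embed h) = gone.
Proof.
  rewrite embedE, wreath_map_single. apply single_one.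
Qed.

Definition eval_at_origin (x : W) : H := fst (fst x gone) 0%Z.

Lemma eval_at_origin_embed (h : H) : eval_at_origin (embed h) = h.
Proof. unfold eval_at_origin. rewrite embedE, !single_at. reflexivity. Qed.

Lemma eval_at_origin_mul (x y : W) :
  pi x = gone -> eval_at_origin (gmul x y) = gmul (eval_at_origin x) (eval_at_origin y).
Proof.
  intro pix. unfold eval_at_origin.
  rewrite wr_fst_mul by exact (f_equal snd pix).
  rewrite wr_fst_mul by exact (f_equal (fun z => fst z gone) pix).
  reflexivity.
Qed.

Definition retraction : hom (subgroup_group (kernel p)) H.
Proof.
  refine {| hfun := fun x : subgroup_group (kernel p) =>
                      eval_at_origin (proj1_sig (proj1_sig x)) |}.
  intros x y. apply eval_at_origin_mul, (f_equal (@proj1_sig _ _) (proj2_sig x)).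
Defined.

Context {x0 : G0} (Fx0 : smem (F G0) x0) (x0_ne1 : x0 <> gone).

Lemma embed_mem (h : H) : smem (F W) (embed h).
Proof.
  rewrite (embed_commg h x0_ne1).
  apply subfunctor_commg, subfunctor_commg, HF, Fx0; exact HF.
Qed.

Lemma embed_mem_kernel (h : H) : smem (kernel p) (hom_corestrict embed _ embed_mem h).
Proof. apply sg_eq, pi_embed. Qed.

Definition embedding : hom H (subgroup_group (kernel p)) :=
  hom_corestrict (hom_corestrict embed _ embed_mem) _ embed_mem_kernel.

Lemma retraction_embedding (h : H) : retraction (embedding h) = h.
Proof. apply eval_at_origin_embed. Qed.
End Embedding.

Theorem theorem3p10 (R : Group -> Prop)
  (Hproper : proper_subcat R) (Hrefl : reflective R) :
  ~ exists F : forall G : Group, subgroup G,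
      is_subfunctor F /\ nontrivial_subfunctor F /\
      forall G : Group, R (subgroup_group (F G)).
Proof.
  intros [F [HF [[G0 [x0 [Fx0 x0_ne1]]] RF]]].
  destruct Hproper as [Riso [H notRH]]. apply notRH.
  apply (reflective_retract Riso Hrefl (embedding HF H G0 Fx0 x0_ne1) (retraction HF H G0)).
  - apply (reflective_kernel Riso Hrefl); apply RF.
  - apply retraction_embedding.
Qed.
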